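(* Assume that $\mu \colon \mathcal{R}^2 \to \mathbb{R}^2$ is an $\mathrm{SL}(2)$-covariant valuation which splits over pyramids, with associated map $\bar\mu$. Then, for $a,b > 0$ and $x,y \in \mathbb{R}$, the function \[ f^I(x, y) := \mu \left[ I, -c \begin{pmatrix} x \\ 1 \end{pmatrix}, d \begin{pmatrix} y \\ 1 \end{pmatrix} \right] - \begin{pmatrix} 1 & 0 \\ x & 1 \end{pmatrix} \bar\mu [I, -c e_2] - \begin{pmatrix} 1 & 0 \\ y & 1 \end{pmatrix} \bar\mu [I, d e_2] \] is independent of $c,d > 0$ as long as $a, b, c, d, x, y$ form a double pyramid. Moreover, \[ f^I(x, y) = f^I(x, 0) + f^I(0, y) \] and \[ f^I(x, y) = \begin{pmatrix} 1 & 0 \\ y & 1 \end{pmatrix} f^I(x-y, 0) . \]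
   Context: Let $e_1,e_2$ be the standard basis of $\mathbb{R}^2$. For $a,b,c,d>0$ let $I=[-a e_1, b e_1]$ and $J=[-c e_2, d e_2]$; $[P_1,\dots,P_m]$ denotes the convex hull of $P_1\cup\dots\cup P_m$. For $x,y\in\mathbb{R}$, the numbers $a,b,c,d,x,y$ form a double pyramid if $\left[I, -c\begin{pmatrix} x\\1\end{pmatrix}, d\begin{pmatrix} y\\1\end{pmatrix}\right]\cap e_2^\perp = I$; $\mathcal{R}^2$ is the set of such double pyramids and $\mathcal{Q}^2\subseteq\mathcal{R}^2$ the set of straight ones ($x=y=0$). A valuation $\mu\colon \mathcal{Q}^2\to\mathbb{R}^2$ (or on $\mathcal{R}^2$) splits over pyramids if there is a map $\bar\mu$ such that $\mu[I,J]=\bar\mu[I,-c e_2]+\bar\mu[I,d e_2]$ for all $a,b,c,d>0$. $\mathrm{SL}(2)$-covariance means $\mu(\phi P)=\phi\,\mu(P)$ for all $\phi\in\mathrm{SL}(2)$ and $P$ in the domain for which $\phi P$ is also in the domain. *)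

From HB Require Import structures.
From mathcomp Require Import all_boot all_order all_algebra.
From mathcomp Require Import boolp classical_sets reals.
Set Implicit Arguments. Unset Strict Implicit. Unset Printing Implicit Defensive.
Import Order.TTheory GRing.Theory Num.Theory.
Local Open Scope ring_scope.
Local Open Scope classical_set_scope.

(* Points of R^2 are column vectors 'cV[R]_2; matrices act by left multiplication. *)
Section Defs.
Variable R : realType.

Definition pt (u v : R) : 'cV[R]_2 := \col_(i < 2) [:: u; v]`_i.
Definition e1 : 'cV[R]_2 := pt 1 0.
Definition e2 : 'cV[R]_2 := pt 0 1.

Definition conv (s : seq 'cV[R]_2) : set 'cV[R]_2 :=
  [set p | exists l : 'I_(size s) -> R,
     (forall i, 0 <= l i) /\ \sum_(i < size s) l i = 1 /\
     p = \sum_(i < size s) l i *: s`_i].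

Definition segI (a b : R) : set 'cV[R]_2 := conv [:: -a *: e1; b *: e1].

Definition straight_dp (a b c d : R) : set 'cV[R]_2 :=
  conv [:: -a *: e1; b *: e1; -c *: e2; d *: e2].

Definition pyr_lo (a b c : R) : set 'cV[R]_2 := conv [:: -a *: e1; b *: e1; -c *: e2].
Definition pyr_hi (a b d : R) : set 'cV[R]_2 := conv [:: -a *: e1; b *: e1; d *: e2].

Definition dpoly (a b c d x y : R) : set 'cV[R]_2 :=
  conv [:: -a *: e1; b *: e1; -c *: pt x 1; d *: pt y 1].

Definition e2perp : set 'cV[R]_2 := [set p | p ord_max ord0 = 0].

Definition is_dp (a b c d x y : R) : Prop :=
  [/\ 0 < a, 0 < b, 0 < c, 0 < d & dpoly a b c d x y `&` e2perp = segI a b].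

Definition DP : set (set 'cV[R]_2) :=
  [set P | exists a b c d x y, is_dp a b c d x y /\ P = dpoly a b c d x y].

Definition is_valuation_on (D : set (set 'cV[R]_2)) (mu : set 'cV[R]_2 -> 'cV[R]_2) :=
  forall P Q, D P -> D Q -> D (P `|` Q) -> D (P `&` Q) ->
    mu (P `|` Q) + mu (P `&` Q) = mu P + mu Q.

Definition image_mx (phi : 'M[R]_2) (P : set 'cV[R]_2) : set 'cV[R]_2 :=
  (fun p => phi *m p) @` P.

Definition SL2_covariant_on (D : set (set 'cV[R]_2)) (mu : set 'cV[R]_2 -> 'cV[R]_2) :=
  forall (phi : 'M[R]_2) P, \det phi = 1 -> D P -> D (image_mx phi P) ->
    mu (image_mx phi P) = phi *m mu P.

Definition splits_over_pyramids (mu mubar : set 'cV[R]_2 -> 'cV[R]_2) :=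
  forall a b c d, 0 < a -> 0 < b -> 0 < c -> 0 < d ->
    mu (straight_dp a b c d) = mubar (pyr_lo a b c) + mubar (pyr_hi a b d).

(* the shear fixing e1 and sending e2 to (x,1) (the paper's matrix (1 0; x 1)) *)
Definition shear (x : R) : 'M[R]_2 :=
  \matrix_(i < 2, j < 2)
    (if (i == ord0) && (j == ord_max) then x else (i == j)%:R).

Definition fI (mu mubar : set 'cV[R]_2 -> 'cV[R]_2) (a b c d x y : R) : 'cV[R]_2 :=
  mu (dpoly a b c d x y) - shear x *m mubar (pyr_lo a b c)
                        - shear y *m mubar (pyr_hi a b d).
End Defs.

(* A double pyramid [I, -c (x,1), d (y,1)] is the union of its lower triangle
   [I, -c (x,1)] and its upper triangle [I, d (y,1)], which meet exactly in I.
   If L <= L' are lower and U' <= U are upper triangles, then L u U and L' u U' have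
   union L' u U and intersection L u U', so the valuation property yields an exchange
   identity, in which the shear corrections of f^I cancel.  Taking for L u U' a thin
   straight double pyramid, on which f^I vanishes because mu splits, gives
   f^I(c, d, x, y) = f^I(e, d, 0, y) + f^I(c, f, x, 0) for all small e, f > 0.
   This is the additivity, and for y = 0 (resp. x = 0) it shows that f^I does not
   change when d (resp. c) decreases.  Covariance under shears gives
   f^I(c, d, x, y) = shear s * f^I(c, d, x - s, y - s), which moves any point onto
   these axes; hence f^I does not depend on c and d, and the last formula is s = y. *)

From mathcomp Require Import all_boot all_order all_algebra.
From mathcomp Require Import classical_sets reals.
From mathcomp Require Import ring lra.

Set Implicit Arguments.
Unset Strict Implicit.
Unset Printing Implicit Defensive.
Import Order.TTheory GRing.Theory Num.Theory.
Local Open Scope ring_scope.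
Local Open Scope classical_set_scope.

Lemma exchange_sub (V : zmodType) (M1 M2 M3 M4 A1 A2 B1 B2 : V) :
  M1 + M2 = M3 + M4 ->
  (M1 - A2 - B1) + (M2 - A1 - B2) = (M3 - A1 - B1) + (M4 - A2 - B2).
Proof.
move=> E; rewrite [LHS]addrACA [X in X + _ = _]addrACA [RHS]addrACA.
by rewrite [X in _ = X + _]addrACA E (addrC (- A2)).
Qed.

Section Plane.
Variable R : realType.
Implicit Types (u v s t : R) (z w : 'cV[R]_2).

Local Notation xc z := (z ord0 ord0).
Local Notation yc z := (z ord_max ord0).

Lemma pt_x u v : xc (pt u v) = u. Proof. by rewrite mxE. Qed.
Lemma pt_y u v : yc (pt u v) = v. Proof. by rewrite mxE. Qed.

Lemma col2P z w : xc z = xc w -> yc z = yc w -> z = w.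
Proof.
move=> ex ey; apply/matrixP => -[[|[|//]] i] j; rewrite (ord1 j).
- by rewrite (_ : Ordinal i = ord0) //; apply: val_inj.
- by rewrite (_ : Ordinal i = ord_max) //; apply: val_inj.
Qed.

Lemma ptE z : z = pt (xc z) (yc z).
Proof. by apply: col2P; rewrite ?pt_x ?pt_y. Qed.

Lemma scale_pt k u v : k *: pt u v = pt (k * u) (k * v).
Proof. by apply: col2P; rewrite !mxE. Qed.

Lemma add_pt u v u' v' : pt u v + pt u' v' = pt (u + u') (v + v').
Proof. by apply: col2P; rewrite !mxE. Qed.

Lemma shear_pt s u v : shear s *m pt u v = pt (u + s * v) v.
Proof. by apply: col2P; rewrite !mxE !big_ord_recl big_ord0 !mxE /=; ring. Qed.

Lemma det_shear s : \det (shear s) = 1.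
Proof.
rewrite (expand_det_row _ ord0) !big_ord_recl big_ord0 /cofactor !det_mx11 !mxE /=.
ring.
Qed.

Lemma shearD s t : shear s *m shear t = shear (s + t).
Proof.
apply/matrixP => -[[|[|//]] i] [[|[|//]] j]; rewrite !mxE !big_ord_recl big_ord0 !mxE /=.
all: ring.
Qed.

Lemma shear0 : shear 0 = 1%:M :> 'M[R]_2.
Proof. by apply/matrixP => -[[|[|//]] i] [[|[|//]] j]; rewrite !mxE. Qed.

Lemma conv2P p1 p2 z : conv [:: p1; p2] z <-> exists l1 l2 : R,
  [/\ 0 <= l1, 0 <= l2, l1 + l2 = 1 & z = l1 *: p1 + l2 *: p2].
Proof.
rewrite /conv /=; split=> [[l [l0 []]] | [l1 [l2 [h1 h2 hs ->]]]].
  rewrite !big_ord_recl !big_ord0 !addr0 => hs ->.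
  by exists (l ord0), (l (lift ord0 ord0)).
exists (fun i : 'I_2 => [:: l1; l2]`_i).
by split=> [[[|[|//]] i] //|]; rewrite !big_ord_recl !big_ord0 !addr0.
Qed.

Lemma conv3P p1 p2 p3 z : conv [:: p1; p2; p3] z <-> exists l1 l2 l3 : R,
  [/\ 0 <= l1, 0 <= l2, 0 <= l3, l1 + l2 + l3 = 1 &
      z = l1 *: p1 + l2 *: p2 + l3 *: p3].
Proof.
rewrite /conv /=; split=> [[l [l0 []]] | [l1 [l2 [l3 [h1 h2 h3 hs ->]]]]].
  rewrite !big_ord_recl !big_ord0 !addr0 !addrA => hs ->.
  by exists (l ord0), (l (lift ord0 ord0)), (l (lift ord0 (lift ord0 ord0))).
exists (fun i : 'I_3 => [:: l1; l2; l3]`_i).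
by split=> [[[|[|[|//]]] i] //|]; rewrite !big_ord_recl !big_ord0 !addr0 !addrA.
Qed.

Lemma conv4P p1 p2 p3 p4 z : conv [:: p1; p2; p3; p4] z <-> exists l1 l2 l3 l4 : R,
  [/\ 0 <= l1, 0 <= l2, 0 <= l3, 0 <= l4 &
      l1 + l2 + l3 + l4 = 1 /\ z = l1 *: p1 + l2 *: p2 + l3 *: p3 + l4 *: p4].
Proof.
rewrite /conv /=; split=> [[l [l0 []]] | [l1 [l2 [l3 [l4 [h1 h2 h3 h4 [hs ->]]]]]]].
  rewrite !big_ord_recl !big_ord0 !addr0 !addrA => hs ->.
  by exists (l ord0), (l (lift ord0 ord0)), (l (lift ord0 (lift ord0 ord0))),
    (l (lift ord0 (lift ord0 (lift ord0 ord0)))).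
exists (fun i : 'I_4 => [:: l1; l2; l3; l4]`_i).
by split=> [[[|[|[|[|//]]]] i] //|]; rewrite !big_ord_recl !big_ord0 !addr0 !addrA.
Qed.

Section Triangles.
Variables a b : R.
Hypotheses (ha : 0 < a) (hb : 0 < b).

Definition tri u v := conv [:: pt (-a) 0; pt b 0; pt u v].
Definition quad u v u' v' := conv [:: pt (-a) 0; pt b 0; pt u v; pt u' v'].

(* abscissa of the point where the segment from (u, v) to (u', v') meets e2perp *)
Definition cross u v u' v' := (v' * u - v * u') / (v' - v).

Lemma triP u v z : tri u v z <-> exists l1 l2 l3 : R,
  [/\ 0 <= l1, 0 <= l2, 0 <= l3, l1 + l2 + l3 = 1 &
      z = pt (l1 * - a + l2 * b + l3 * u) (l3 * v)].
Proof.
rewrite /tri conv3P; split=> -[l1 [l2 [l3 [h1 h2 h3 hs ->]]]]; exists l1, l2, l3;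
  by rewrite !scale_pt !add_pt !mulr0 !add0r.
Qed.

Lemma quadP u v u' v' z : quad u v u' v' z <-> exists l1 l2 l3 l4 : R,
  [/\ 0 <= l1, 0 <= l2, 0 <= l3, 0 <= l4 & l1 + l2 + l3 + l4 = 1 /\
      z = pt (l1 * - a + l2 * b + l3 * u + l4 * u') (l3 * v + l4 * v')].
Proof.
rewrite /quad conv4P; split=> -[l1 [l2 [l3 [l4 [h1 h2 h3 h4 [hs ->]]]]]];
  by exists l1, l2, l3, l4; rewrite !scale_pt !add_pt !mulr0 !add0r.
Qed.

Lemma between_convex l1 l2 : 0 <= l1 -> 0 <= l2 -> l1 + l2 = 1 ->
  -a <= l1 * - a + l2 * b <= b.
Proof.
move=> h1 h2 hs; have := mulr_ge0 h1 (ltW (addr_gt0 ha hb)).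
have := mulr_ge0 h2 (ltW (addr_gt0 ha hb)).
have ea : a = l1 * a + l2 * a by rewrite -mulrDl hs mul1r.
have eb : b = l1 * b + l2 * b by rewrite -mulrDl hs mul1r.
by rewrite !mulrDr mulrN => ? ?; apply/andP; split; lra.
Qed.

Lemma segIP z : segI a b z <-> -a <= xc z <= b /\ yc z = 0.
Proof.
rewrite /segI /e1 conv2P; split.
  move=> [l1 [l2 [h1 h2 hs ->]]].
  rewrite !scale_pt !add_pt !mulr0 !mulr1 addr0 pt_x pt_y.
  by split=> //; apply: between_convex.
move=> [/andP[x1 x2] y0]; set t := (xc z + a) / (a + b).
have t0 : 0 <= t by apply: divr_ge0; lra.
have t1 : t <= 1 by rewrite ler_pdivrMr ?addr_gt0 //; lra.
exists (1 - t), t; split; [lra | lra | ring |].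
rewrite !scale_pt !add_pt !mulr0 !mulr1 addr0 [LHS]ptE y0; congr pt.
by rewrite /t; field; rewrite lt0r_neq0 ?addr_gt0.
Qed.

Lemma mem_tri_pt u v t X : 0 <= t <= 1 -> -a * (1 - t) <= X - t * u <= b * (1 - t) ->
  tri u v (pt X (t * v)).
Proof.
move=> /andP[t0 t1] /andP[m1 m2]; set l2 := (X - t * u + a * (1 - t)) / (a + b).
have hab : 0 < a + b by apply: addr_gt0.
have l20 : 0 <= l2 by apply: divr_ge0; lra.
have l2t : l2 <= 1 - t by rewrite ler_pdivrMr //; lra.
apply/triP; exists (1 - t - l2), l2, t; split; [lra | done | done | ring |].
by congr pt; rewrite /l2; field; rewrite lt0r_neq0.
Qed.

Lemma segI_sub_tri u v : segI a b `<=` tri u v.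
Proof.
move=> z /segIP [xz yz]; rewrite [z]ptE yz -(mul0r v).
by apply: mem_tri_pt; rewrite ?lexx ?ler01 // mul0r !subr0 !mulr1.
Qed.

Lemma tri_cap_e2perp u v : v != 0 -> tri u v `&` @e2perp R = segI a b.
Proof.
move=> v0; apply/seteqP; split=> z; last first.
  by move=> zI; split; [apply: segI_sub_tri | have [] := (segIP z).1 zI].
case=> /triP [l1 [l2 [l3 [h1 h2 h3 hs ->]]]]; rewrite /e2perp /= pt_y => /eqP.
rewrite mulf_eq0 (negbTE v0) orbF => /eqP l30; apply/segIP.
rewrite pt_x pt_y l30 !mul0r addr0; split=> //.
by apply: between_convex => //; lra.
Qed.

Lemma tri_cap_sub_e2perp u v u' v' : v < 0 -> 0 < v' ->
  tri u v `&` tri u' v' `<=` @e2perp R.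
Proof.
move=> v0 v'0 z [/triP [l1 [l2 [l3 [_ _ h3 _ ->]]]]].
move=> /triP [m1 [m2 [m3 [_ _ g3 _ /(congr1 (fun w => yc w))]]]].
rewrite /e2perp /= !pt_y => e; apply/eqP; rewrite eq_le.
by apply/andP; split; [apply: mulr_ge0_le0 | rewrite e; apply: mulr_ge0]; rewrite // ltW.
Qed.

Lemma tri_sub_apex u v u' v' : tri u' v' (pt u v) -> tri u v `<=` tri u' v'.
Proof.
move=> /triP [m1 [m2 [m3 [g1 g2 g3 gs /(congr1 (fun w => (xc w, yc w)))]]]].
rewrite !pt_x !pt_y => -[-> ->] z /triP [l1 [l2 [l3 [h1 h2 h3 hs ->]]]].
apply/triP; exists (l1 + l3 * m1), (l2 + l3 * m2), (l3 * m3).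
split; rewrite ?addr_ge0 ?mulr_ge0 //.
- by rewrite -[RHS]hs -[l3 in RHS]mulr1 -gs; ring.
- by congr pt; ring.
Qed.

Lemma tri_scale_sub u v t : 0 <= t <= 1 -> tri (t * u) (t * v) `<=` tri u v.
Proof.
move=> /andP[t0 t1]; apply/tri_sub_apex/mem_tri_pt; first by apply/andP.
have t1' : 0 <= 1 - t by lra.
have := mulr_ge0 (ltW ha) t1'; have := mulr_ge0 (ltW hb) t1'.
by rewrite subrr => ? ?; apply/andP; split; lra.
Qed.

Lemma small_axis_apex u v (K : R) :
  exists2 s : R, 0 < s & tri 0 (s * v) `<=` tri u v /\ s * K <= Num.min a b.
Proof.
set m := Num.min a b; have m0 : 0 < m by rewrite lt_min ha hb.
have [ma mb] : m <= a /\ m <= b by apply/andP; rewrite -le_min.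
have u0 := normr_ge0 u; have K0 := normr_ge0 K.
set N := m + 2 * `|u| + `|K|; have mN : m <= N by rewrite /N; lra.
set s := m / (2 * N); have N0 : 0 < N by lra.
have s0 : 0 < s by rewrite divr_gt0 ?mulr_gt0.
have sN : s * N = m / 2 by rewrite /s; field; rewrite lt0r_neq0.
have s_half : s <= 1 / 2 by rewrite -(ler_pM2r N0) sN mul1r ler_pdivrMr //; lra.
have su : `|s * u| <= m / 4.
  rewrite normrM gtr0_norm //; have := mulr_ge0 (ltW s0) u0; rewrite /N in sN; nra.
have sK : s * K <= m.
  have := ler_norm K; have := mulr_ge0 (ltW s0) K0; rewrite /N in sN; nra.
exists s => //; split=> //; apply/tri_sub_apex/mem_tri_pt; first by apply/andP; lra.
move: su; rewrite ler_norml => /andP[su1 su2].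
have s1 : 0 <= 1 - s by lra.
have am : 0 <= a - m by lra. have bm : 0 <= b - m by lra.
have := mulr_ge0 am s1; have := mulr_ge0 bm s1.
by rewrite !mulrBl sub0r => ? ?; apply/andP; split; nra.
Qed.

Lemma crossC u v u' v' : cross u' v' u v = cross u v u' v'.
Proof. by rewrite /cross -[v * u' - v' * u]opprB -[v - v']opprB invrN mulrNN. Qed.

Lemma quadC u v u' v' : quad u v u' v' = quad u' v' u v.
Proof.
apply/seteqP; split=> z /quadP [l1 [l2 [l3 [l4 [h1 h2 h3 h4 [hs ->]]]]]];
  by apply/quadP; exists l1, l2, l4, l3; split=> //; split; [lra | congr pt; ring].
Qed.

Lemma quad_sub_tri u v u' v' z : v * v' < 0 -> -a <= cross u v u' v' <= b ->
  quad u v u' v' z -> 0 <= yc z / v -> tri u v z.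
Proof.
move=> vv /andP[c1 c2] /quadP [l1 [l2 [l3 [l4 [h1 h2 h3 h4 [hs ->]]]]]].
rewrite pt_y => hy.
have v0 : v != 0 by apply: contraTneq vv => ->; rewrite mul0r ltxx.
have v'v : v' - v != 0.
  by apply: contraTneq vv => /eqP; rewrite subr_eq0 => /eqP ->; rewrite -expr2 ltNge sqr_ge0.
have hab : 0 < a + b by apply: addr_gt0.
set t := (cross u v u' v' + a) / (a + b).
have t0 : 0 <= t by apply: divr_ge0; lra.
have t1 : 0 <= 1 - t by rewrite subr_ge0 ler_pdivrMr //; lra.
set k := l4 * ((v' - v) / - v).
have k0 : 0 <= k.
  rewrite /k; have -> : (v' - v) / - v = 1 - (v * v') / (v * v) by field.
  have : (v * v') / (v * v) <= 0.
    by apply: mulr_le0_ge0; [exact: ltW | rewrite invr_ge0 -expr2 sqr_ge0].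
  by move=> ?; apply: mulr_ge0 => //; lra.
(* the apex (u', v') is a combination of (u, v) and of (cross, 0), a point of I *)
apply/triP; exists (l1 + k * (1 - t)), (l2 + k * t), ((l3 * v + l4 * v') / v).
split; [by rewrite addr_ge0 // mulr_ge0 | by rewrite addr_ge0 // mulr_ge0 | done | |].
- have -> : l1 = 1 - l2 - l3 - l4 by lra.
  by rewrite /k /t; field; rewrite v0 lt0r_neq0.
- by congr pt; rewrite /k /t /cross; field; rewrite v0 ?v'v ?(lt0r_neq0 hab).
Qed.

Lemma quad_split u v u' v' : v < 0 -> 0 < v' -> -a <= cross u v u' v' <= b ->
  quad u v u' v' = tri u v `|` tri u' v'.
Proof.
move=> v0 v'0 cr; apply/seteqP; split=> z; last first.
  by case=> /triP [l1 [l2 [l3 [h1 h2 h3 hs ->]]]]; apply/quadP;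
    [exists l1, l2, l3, 0 | exists l1, l2, 0, l3];
    split=> //; split; [lra | congr pt; ring | lra | congr pt; ring].
move=> zq; have vv : v * v' < 0 by rewrite nmulr_rlt0.
have [zy | zy] := lerP (yc z) 0; [left | right].
  by apply: quad_sub_tri zq _; rewrite // -mulrNN -invrN divr_ge0 ?oppr_ge0 // ltW.
rewrite quadC in zq; apply: (@quad_sub_tri u' v' u v z _ _ zq).
- by rewrite mulrC.
- by rewrite crossC.
- by rewrite divr_ge0 ?ltW.
Qed.

Lemma quad_cap_e2perp u v u' v' : v < 0 -> 0 < v' ->
  quad u v u' v' `&` @e2perp R = segI a b -> -a <= cross u v u' v' <= b.
Proof.
move=> v0 v'0 e; have vv : 0 < v' - v by lra.
have : segI a b (pt (cross u v u' v') 0).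
  rewrite -e; split; last by rewrite /e2perp /= pt_y.
  apply/quadP; exists 0, 0, (v' / (v' - v)), (- v / (v' - v)).
  have l3 : 0 <= v' / (v' - v) by rewrite divr_ge0 // ltW.
  have l4 : 0 <= - v / (v' - v) by rewrite divr_ge0 // ltW // oppr_gt0.
  split=> //; split.
    by field; rewrite lt0r_neq0.
  by congr pt; rewrite /cross; field; rewrite lt0r_neq0.
by case/segIP; rewrite pt_x.
Qed.

Lemma image_shear_quad s u v u' v' :
  image_mx (shear s) (quad u v u' v') = quad (u + s * v) v (u' + s * v') v'.
Proof.
apply/seteqP; split=> z.
  move=> [w /quadP [l1 [l2 [l3 [l4 [h1 h2 h3 h4 [hs ->]]]]]] <-].
  by apply/quadP; exists l1, l2, l3, l4; rewrite shear_pt; split=> //; split=> //; congr pt; ring.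
move=> /quadP [l1 [l2 [l3 [l4 [h1 h2 h3 h4 [hs ze]]]]]].
exists (shear (- s) *m z); last by rewrite mulmxA shearD subrr shear0 mul1mx.
by apply/quadP; exists l1, l2, l3, l4; rewrite ze shear_pt; split=> //; split=> //; congr pt; ring.
Qed.

Lemma between_scale q t : -a <= q <= b -> 0 <= t <= 1 -> -a <= q * t <= b.
Proof.
move=> /andP[q1 q2] /andP[t0 t1]; have t1' : 0 <= 1 - t by lra.
have := mulr_ge0 t0 (ltac:(lra) : 0 <= q + a); have := mulr_ge0 t0 (ltac:(lra) : 0 <= b - q).
have := mulr_ge0 t1' (ltW ha); have := mulr_ge0 t1' (ltW hb).
by move=> ? ? ? ?; apply/andP; split; nra.
Qed.

Lemma tri_axis_sub v v' : v != 0 -> 0 <= v' / v <= 1 -> tri 0 v' `<=` tri 0 v.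
Proof.
move=> v0 t01; rewrite -[in X in X `<=` _](divfK v0 v') -[in X in X `<=` _](mulr0 (v' / v)).
exact: tri_scale_sub.
Qed.

End Triangles.

Section DoublePyramids.
Variables a b : R.
Hypotheses (ha : 0 < a) (hb : 0 < b).
Implicit Types (c d x y : R).

Local Notation tri := (tri a b).
Local Notation quad := (quad a b).
Local Notation dpoly := (dpoly a b).
Local Notation is_dp := (is_dp a b).

Lemma dpolyE c d x y : dpoly c d x y = quad (- c * x) (- c) (d * y) d.
Proof. by rewrite /dpoly /quad /e1 !scale_pt !mulr1 !mulr0. Qed.

Lemma cross_dpoly c d x y : 0 < c -> 0 < d ->
  cross (- c * x) (- c) (d * y) d = c * d * (y - x) / (c + d).
Proof. by move=> c0 d0; rewrite /cross; field; rewrite addrC lt0r_neq0 ?addr_gt0. Qed.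

Lemma is_dpE c d x y :
  is_dp c d x y <-> [/\ 0 < c, 0 < d & -a <= c * d * (y - x) / (c + d) <= b].
Proof.
have c_neq0 c' : 0 < c' -> - c' != 0 by move=> ?; rewrite oppr_eq0 lt0r_neq0.
split=> [[_ _ c0 d0 e] | [c0 d0]]; rewrite -cross_dpoly //.
  by split=> //; apply: quad_cap_e2perp; rewrite ?oppr_lt0 // -dpolyE.
move=> cr; split=> //; rewrite dpolyE quad_split ?oppr_lt0 // setIUl.
by rewrite !tri_cap_e2perp ?setUid ?c_neq0 ?lt0r_neq0.
Qed.

Lemma dpoly_split c d x y : is_dp c d x y ->
  dpoly c d x y = tri (- c * x) (- c) `|` tri (d * y) d.
Proof.
by move=> /is_dpE [c0 d0 cr]; rewrite dpolyE quad_split ?oppr_lt0 ?cross_dpoly.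
Qed.

Lemma DP_dpoly c d x y : is_dp c d x y -> DP (dpoly c d x y).
Proof. by move=> h; exists a, b, c, d, x, y. Qed.

Lemma image_shear_dpoly s c d x y :
  image_mx (shear s) (dpoly c d x y) = dpoly c d (x + s) (y + s).
Proof. by rewrite !dpolyE image_shear_quad; congr quad; ring. Qed.

Lemma is_dp_shift s c d x y : is_dp c d x y -> is_dp c d (x + s) (y + s).
Proof. by move=> /is_dpE [c0 d0 cr]; apply/is_dpE; rewrite opprD addrACA subrr addr0. Qed.

Lemma is_dp_sub_y c d x y : is_dp c d x y -> is_dp c d (x - y) 0.
Proof. by move=> /(is_dp_shift (- y)); rewrite subrr. Qed.

Lemma is_dp_sub_x c d x y : is_dp c d x y -> is_dp c d 0 (y - x).
Proof. by move=> /(is_dp_shift (- x)); rewrite subrr. Qed.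

Lemma is_dp_straight c d : 0 < c -> 0 < d -> is_dp c d 0 0.
Proof.
by move=> c0 d0; apply/is_dpE; rewrite subr0 mulr0 mul0r oppr_le0 !ltW.
Qed.

Lemma is_dp_le c d c' d' x y : is_dp c d x y -> 0 < c' -> c' <= c -> 0 < d' -> d' <= d ->
  is_dp c' d' x y.
Proof.
move=> /is_dpE [c0 d0 cr] c'0 c'c d'0 d'd; apply/is_dpE; split=> //.
have -> : c' * d' * (y - x) / (c' + d') =
    c * d * (y - x) / (c + d) * (c' * d' * (c + d) / (c * d * (c' + d'))).
  by field; rewrite !lt0r_neq0 ?addr_gt0.
apply: between_scale => //; apply/andP; split.
  by rewrite divr_ge0 // ?mulr_ge0 ?addr_ge0 // ltW.
rewrite ler_pdivrMr ?mulr_gt0 ?addr_gt0 // mul1r.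
have := mulr_ge0 (ltW c'0) (ltW c0); have := mulr_ge0 (ltW d'0) (ltW d0).
by move=> ? ?; nra.
Qed.

Lemma is_dp_small c d x y : 0 < c -> 0 < d ->
  Num.min c d * `|y - x| <= Num.min a b -> is_dp c d x y.
Proof.
move=> c0 d0 small; apply/is_dpE; split=> //.
have h_le : c * d / (c + d) <= Num.min c d.
  rewrite le_min !ler_pdivrMr ?addr_gt0 //.
  by have := mulr_gt0 c0 d0; have := mulr_gt0 c0 c0; have := mulr_gt0 d0 d0; nra.
have h0 : 0 <= c * d / (c + d) by rewrite divr_ge0 ?mulr_ge0 ?addr_ge0 ?ltW.
have : `|c * d * (y - x) / (c + d)| <= Num.min a b.
  rewrite mulrAC normrM (ger0_norm h0); apply: le_trans small.
  by apply: ler_wpM2r => //; apply: normr_ge0.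
have [ma mb] : Num.min a b <= a /\ Num.min a b <= b by apply/andP; rewrite -le_min.
by rewrite ler_norml => /andP[? ?]; apply/andP; split; lra.
Qed.

End DoublePyramids.

Section Valuation.
Variables mu mubar : set 'cV[R]_2 -> 'cV[R]_2.
Hypotheses (mu_val : is_valuation_on (@DP R) mu) (mu_cov : SL2_covariant_on (@DP R) mu).
Hypothesis mu_split : splits_over_pyramids mu mubar.
Variables a b : R.
Hypotheses (ha : 0 < a) (hb : 0 < b).
Implicit Types (c d e f x y : R).

Local Notation tri := (tri a b).
Local Notation dpoly := (dpoly a b).
Local Notation is_dp := (is_dp a b).
Local Notation fI := (fI mu mubar a b).

Lemma mu_shear s c d x y : is_dp c d x y ->
  mu (dpoly c d (x + s) (y + s)) = shear s *m mu (dpoly c d x y).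
Proof.
move=> h; rewrite -image_shear_dpoly; apply: mu_cov; first exact: det_shear.
  exact: DP_dpoly.
by rewrite image_shear_dpoly; apply/DP_dpoly/is_dp_shift.
Qed.

Lemma mu_exchange c1 x1 c2 x2 d1 y1 d2 y2 :
  is_dp c1 d1 x1 y1 -> is_dp c2 d1 x2 y1 -> is_dp c1 d2 x1 y2 -> is_dp c2 d2 x2 y2 ->
  tri (- c1 * x1) (- c1) `<=` tri (- c2 * x2) (- c2) ->
  tri (d2 * y2) d2 `<=` tri (d1 * y1) d1 ->
  mu (dpoly c2 d1 x2 y1) + mu (dpoly c1 d2 x1 y2) =
  mu (dpoly c1 d1 x1 y1) + mu (dpoly c2 d2 x2 y2).
Proof.
move=> h11 h21 h12 h22 subL subU.
have [c2_0 d1_0 _] := (is_dpE ha hb _ _ _ _).1 h21.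
have eU : dpoly c1 d1 x1 y1 `|` dpoly c2 d2 x2 y2 = dpoly c2 d1 x2 y1.
  rewrite !dpoly_split //; apply/seteqP; split=> z /=.
    by case=> [[] | []] zt; [left; apply: subL | right | left | right; apply: subU].
  by case=> zt; [right; left | left; right].
have eI : dpoly c1 d1 x1 y1 `&` dpoly c2 d2 x2 y2 = dpoly c1 d2 x1 y2.
  rewrite !dpoly_split //; apply/seteqP; split=> z /=; last first.
    by case=> zt; split; [left | left; apply: subL | right; apply: subU | right].
  case=> -[] zt [] zt'; [by left | by left | | by right].
  have c2_neg : - c2 < 0 by rewrite oppr_lt0.
  left; apply: segI_sub_tri => //.
  rewrite -(tri_cap_e2perp ha hb (d1 * y1) (lt0r_neq0 d1_0)); split=> //.
  exact: (tri_cap_sub_e2perp c2_neg d1_0 (conj zt' zt)).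
rewrite -eU -eI; apply: mu_val; rewrite ?eU ?eI; exact: DP_dpoly.
Qed.

Lemma fI_exchange c1 x1 c2 x2 d1 y1 d2 y2 :
  is_dp c1 d1 x1 y1 -> is_dp c2 d1 x2 y1 -> is_dp c1 d2 x1 y2 -> is_dp c2 d2 x2 y2 ->
  tri (- c1 * x1) (- c1) `<=` tri (- c2 * x2) (- c2) ->
  tri (d2 * y2) d2 `<=` tri (d1 * y1) d1 ->
  fI c2 d1 x2 y1 + fI c1 d2 x1 y2 = fI c1 d1 x1 y1 + fI c2 d2 x2 y2.
Proof. by move=> *; apply/exchange_sub/mu_exchange. Qed.

Lemma fI_straight c d : 0 < c -> 0 < d -> fI c d 0 0 = 0.
Proof.
move=> c0 d0; rewrite /fI shear0 !mul1mx.
rewrite (mu_split ha hb c0 d0 : mu (dpoly c d 0 0) = _).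
by rewrite addrAC addrK subrr.
Qed.

Lemma fI_shift s c d x y : is_dp c d x y ->
  fI c d x y = shear s *m fI c d (x - s) (y - s).
Proof.
move=> h; have := mu_shear s (is_dp_shift ha hb (- s) h); rewrite !subrK /fI => ->.
by rewrite !mulmxBr !mulmxA !shearD ![s + _]addrC !subrK.
Qed.

Lemma fI_split c d x y e f : is_dp c d x y -> 0 < e -> 0 < f ->
  tri 0 (- e) `<=` tri (- c * x) (- c) -> tri 0 f `<=` tri (d * y) d ->
  is_dp e d 0 y -> is_dp c f x 0 ->
  fI c d x y = fI e d 0 y + fI c f x 0.
Proof.
move=> h e0 f0 subL subU he hf.
have := @fI_exchange e 0 c x d y f 0 he h (is_dp_straight ha hb e0 f0) hf.
rewrite fI_straight // addr0 !mulr0 => ->; [done | exact: subL | exact: subU].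
Qed.

Lemma fI_shrink_d c d d' x y : is_dp c d x y -> 0 < d' -> d' <= d ->
  fI c d x y = fI c d' x y.
Proof.
move=> h d'0 d'd; have [c0 d0 _] := (is_dpE ha hb _ _ _ _).1 h.
have h' := is_dp_le ha hb h c0 (lexx c) d'0 d'd.
rewrite (fI_shift y h) (fI_shift y h') subrr; congr (_ *m _).
have [s s0 [subL _]] := small_axis_apex ha hb (- c * (x - y)) (- c) 0.
rewrite (fI_split (is_dp_sub_y ha hb h) (mulr_gt0 s0 c0) d'0) ?fI_straight ?add0r ?mulr_gt0 //.
- by rewrite -mulrN.
- rewrite mulr0; apply: (tri_axis_sub ha hb); first by rewrite lt0r_neq0.
  by apply/andP; split; [rewrite divr_ge0 // ltW | rewrite ler_pdivrMr // mul1r].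
- exact: is_dp_straight (mulr_gt0 s0 c0) d0.
- exact: is_dp_sub_y.
Qed.

Lemma fI_shrink_c c c' d x y : is_dp c d x y -> 0 < c' -> c' <= c ->
  fI c d x y = fI c' d x y.
Proof.
move=> h c'0 c'c; have [c0 d0 _] := (is_dpE ha hb _ _ _ _).1 h.
have h' := is_dp_le ha hb h c'0 c'c d0 (lexx d).
rewrite (fI_shift x h) (fI_shift x h') subrr; congr (_ *m _).
have [s s0 [subU _]] := small_axis_apex ha hb (d * (y - x)) d 0.
rewrite (fI_split (is_dp_sub_x ha hb h) c'0 (mulr_gt0 s0 d0)) ?fI_straight ?addr0 ?mulr_gt0 //.
- rewrite mulr0; apply: (tri_axis_sub ha hb); first by rewrite oppr_eq0 lt0r_neq0.
  rewrite invrN mulrNN.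
  by apply/andP; split; [rewrite divr_ge0 // ltW | rewrite ler_pdivrMr // mul1r].
- exact: is_dp_sub_x.
- exact: is_dp_straight c0 (mulr_gt0 s0 d0).
Qed.

Lemma fI_indep c d c' d' x y : is_dp c d x y -> is_dp c' d' x y ->
  fI c d x y = fI c' d' x y.
Proof.
move=> h h'; have [c0 d0 _] := (is_dpE ha hb _ _ _ _).1 h.
have [c'0 d'0 _] := (is_dpE ha hb _ _ _ _).1 h'.
set m := Num.min c c'; set n := Num.min d d'.
have m0 : 0 < m by rewrite lt_min c0 c'0.
have n0 : 0 < n by rewrite lt_min d0 d'0.
have [mc mc'] : m <= c /\ m <= c' by apply/andP; rewrite -le_min.
have [nd nd'] : n <= d /\ n <= d' by apply/andP; rewrite -le_min.
rewrite (fI_shrink_d h n0 nd) (fI_shrink_d h' n0 nd').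
rewrite (fI_shrink_c (is_dp_le ha hb h c0 (lexx c) n0 nd) m0 mc).
by rewrite (fI_shrink_c (is_dp_le ha hb h' c'0 (lexx c') n0 nd') m0 mc').
Qed.

Lemma fI_additive c d c1 d1 c2 d2 x y :
  is_dp c d x y -> is_dp c1 d1 x 0 -> is_dp c2 d2 0 y ->
  fI c d x y = fI c1 d1 x 0 + fI c2 d2 0 y.
Proof.
move=> h h1 h2; have [c0 d0 _] := (is_dpE ha hb _ _ _ _).1 h.
have [s s0 [subL sy]] := small_axis_apex ha hb (- c * x) (- c) (c * `|y|).
have [t t0 [subU tx]] := small_axis_apex ha hb (d * y) d (d * `|x|).
have he : is_dp (s * c) d 0 y.
  apply: is_dp_small; rewrite ?mulr_gt0 // subr0; apply: le_trans sy.
  by rewrite mulrA ler_wpM2r // ge_min lexx.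
have hf : is_dp c (t * d) x 0.
  apply: is_dp_small; rewrite ?mulr_gt0 // sub0r normrN; apply: le_trans tx.
  by rewrite mulrA ler_wpM2r // ge_min lexx orbT.
rewrite (fI_split h _ _ _ subU he hf) ?mulr_gt0 -?mulrN //.
by rewrite addrC (fI_indep he h2) (fI_indep hf h1).
Qed.

Lemma fI_shear c d c1 d1 x y : is_dp c d x y -> is_dp c1 d1 (x - y) 0 ->
  fI c d x y = shear y *m fI c1 d1 (x - y) 0.
Proof.
move=> h h1; rewrite (fI_shift y h) subrr.
by rewrite (fI_indep (is_dp_sub_y ha hb h) h1).
Qed.

End Valuation.
End Plane.

Theorem lemma3p4 (R : realType) (mu mubar : set 'cV[R]_2 -> 'cV[R]_2) :
  is_valuation_on (@DP R) mu ->
  SL2_covariant_on (@DP R) mu ->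
  splits_over_pyramids mu mubar ->
  forall a b : R, 0 < a -> 0 < b ->
  [/\ (forall c d c' d' x y, is_dp a b c d x y -> is_dp a b c' d' x y ->
         fI mu mubar a b c d x y = fI mu mubar a b c' d' x y),
      (forall x y c d c1 d1 c2 d2,
         is_dp a b c d x y -> is_dp a b c1 d1 x 0 -> is_dp a b c2 d2 0 y ->
         fI mu mubar a b c d x y = fI mu mubar a b c1 d1 x 0 + fI mu mubar a b c2 d2 0 y) &
      (forall x y c d c1 d1,
         is_dp a b c d x y -> is_dp a b c1 d1 (x - y) 0 ->
         fI mu mubar a b c d x y = shear y *m fI mu mubar a b c1 d1 (x - y) 0)].
Proof.
move=> val cov split a b ha hb.
by split=> *; [apply: fI_indep | apply: fI_additive | apply: fI_shear].
Qed.
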